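(* Let $G$ be a graph on an $n$-element vertex set such that every $3$-subset of the vertices contains an edge of $G$. Then there exist a labeling of the vertex set by $[n]$ and a combinatorial shifting $G^c$ of (the edge set of) $G$ such that $G^c\supseteq B(n)=\{\{a,b\}:1\le a<b\le n,\ a+b\le n\}$.
   Context: For $i<j$, the operation $\mathrm{sh}_{ij}$ on a family $\mathcal F$ of $k$-subsets of $[n]$ replaces each $F\in\mathcal F$ with $j\in F$, $i\notin F$ and $(F\setminus\{j\})\cup\{i\}\notin\mathcal F$ by $(F\setminus\{j\})\cup\{i\}$, and leaves the other members unchanged. A family is shifted if for every $F$ in it and $i<j$ with $j\in F$, $i\notin F$, also $(F\setminus\{j\})\cup\{i\}$ is in it. A combinatorial shifting of $\mathcal F$ is any family obtained from $\mathcal F$ by applying a finite sequence of operations $\mathrm{sh}_{ij}$ ($i<j$) until a shifted family is reached. *)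

From mathcomp Require Import all_boot.
Set Implicit Arguments. Unset Strict Implicit. Unset Printing Implicit Defensive.

(* Labels [n] = {1,...,n} are represented by 'I_n = {0,...,n-1} via x |-> x+1;
   this preserves the order, so shifting sh_ij with i<j is unchanged. *)

Definition sh (n : nat) (i j : 'I_n) (F : {set {set 'I_n}}) : {set {set 'I_n}} :=
  [set (if [&& j \in A, i \notin A & (i |: (A :\ j)) \notin F]
        then i |: (A :\ j) else A) | A : {set 'I_n} in F].

Definition shifted (n : nat) (F : {set {set 'I_n}}) : Prop :=
  forall (A : {set 'I_n}) (i j : 'I_n), A \in F -> (i < j)%N ->
    j \in A -> i \notin A -> (i |: (A :\ j)) \in F.

Definition apply_shifts (n : nat) (s : seq ('I_n * 'I_n)%type) (F : {set {set 'I_n}}) :=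
  foldl (fun G p => sh p.1 p.2 G) F s.

Definition comb_shifting (n : nat) (F Fc : {set {set 'I_n}}) : Prop :=
  exists s : seq ('I_n * 'I_n)%type,
    all (fun p : 'I_n * 'I_n => (p.1 < p.2)%N) s /\ apply_shifts s F = Fc /\ shifted Fc.

(* B(n) = {{a,b} : 1 <= a < b <= n, a + b <= n}; with 0-based labels a', b'
   (a = a'+1, b = b'+1) the condition a + b <= n reads a'.+1 + b'.+1 <= n. *)
Definition Bn (n : nat) : {set {set 'I_n}} :=
  [set A : {set 'I_n} | [exists a : 'I_n, exists b : 'I_n,
     [&& (a < b)%N, (a.+1 + b.+1 <= n)%N & A == [set a; b]]]].

From mathcomp Require Import all_boot.
From mathcomp Require Import zify.
Set Implicit Arguments. Unset Strict Implicit. Unset Printing Implicit Defensive.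

(* Pick greedily disjoint non-adjacent pairs {x_t, y_t}, t < K; the vertices
   left over form a clique.  Label the vertices x_0, ..., x_(K-1), then the
   clique, then y_(K-1), ..., y_0, so that y_t gets the label n-1-t, and apply
   sh_(t, n-1-t) for t = 0, ..., K-1.  When sh_(t, n-1-t) is applied and
   t < b <= n-2-t, the triple {t, b, n-1-t} contains an edge other than the
   non-edge {t, n-1-t}: either {t, b} is present, or {n-1-t, b} is shifted to
   {t, b}.  This produces the pairs of B(n) with smaller element below K; the
   others lie inside the clique.  Since B(n) is shifted it survives the further
   shifts needed to reach a shifted family, and these exist because every
   effective shift lowers the total label weight. *)

Definition ordered_pair {n} (p : 'I_n * 'I_n) := (p.1 < p.2)%N.

Section Shifting.
Variable n : nat.
Implicit Types (F D : {set {set 'I_n}}) (A : {set 'I_n}) (i j : 'I_n).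

Definition shift_member i j F A :=
  if [&& j \in A, i \notin A & (i |: (A :\ j)) \notin F] then i |: (A :\ j) else A.

Lemma sh_keep i j F A : A \in F ->
  (j \in A -> i \notin A -> i |: (A :\ j) \in F) -> A \in sh i j F.
Proof.
move=> FA FB; apply/imsetP; exists A => //.
by case: (boolP (j \in A)) => //= jA; case: (boolP (i \in A)) => //= iA; rewrite FB.
Qed.

Lemma sh_keep_notin i j F A : A \in F -> j \notin A -> A \in sh i j F.
Proof. by move=> FA jA; apply: sh_keep => // /(negP jA). Qed.

Lemma sh_shift i j F A : A \in F -> j \in A -> i \notin A -> i |: (A :\ j) \in sh i j F.
Proof.
move=> FA jA iA; case: (boolP (i |: (A :\ j) \in F)) => [FB|FB].
  by apply: sh_keep => // _; rewrite setU11.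
by apply/imsetP; exists A; rewrite // jA iA FB.
Qed.

Lemma sh_pair i j b F : i != j -> i != b -> j != b ->
  [set j; b] \in F -> [set i; b] \in sh i j F.
Proof.
move=> ij ib jb Fjb; have := sh_shift (i := i) Fjb (set21 j b).
by rewrite setU1K ?in_set1 //; apply; rewrite in_set2 negb_or ij.
Qed.

Lemma shifted_sub_apply_shifts D F s : shifted D -> D \subset F ->
  all ordered_pair s -> D \subset apply_shifts s F.
Proof.
move=> shD; elim: s F => [|[i j] s IHs] F //= DF /andP[ij lt_s].
apply: IHs => //; apply/subsetP => A DA; apply: sh_keep; first exact: (subsetP DF).
by move=> jA iA; apply: (subsetP DF); apply: shD.
Qed.

Definition weight A := (\sum_(x in A) (x : nat))%N.
Definition fweight F := (\sum_(A in F) weight A)%N.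

Lemma weight_shift i j A : j \in A -> i \notin A ->
  (weight (i |: (A :\ j)) + j = weight A + i)%N.
Proof.
move=> jA iA; rewrite /weight big_setU1 1?(big_setD1 _ jA) /=.
  by rewrite addnC [RHS]addnC addnCA.
by rewrite in_setD1 negb_and iA orbT.
Qed.

Lemma shift_member_inj i j F : i != j -> {in F &, injective (shift_member i j F)}.
Proof.
have shiftK A : j \in A -> i \notin A -> A = j |: ((i |: (A :\ j)) :\ i).
  by move=> jA iA; rewrite setU1K ?setD1K // in_setD1 negb_and iA orbT.
move=> ij A1 A2 FA1 FA2; rewrite /shift_member.
case: and3P => [[jA1 iA1 nFB1]|_]; case: and3P => [[jA2 iA2 nFB2]|_] //.
- by move=> eqB; rewrite (shiftK A1) // (shiftK A2) // eqB.
- by move=> eqB; move: nFB1; rewrite eqB FA2.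
- by move=> eqB; move: nFB2; rewrite -eqB FA1.
Qed.

Lemma fweight_sh i j F A : (i < j)%N -> A \in F -> j \in A -> i \notin A ->
  i |: (A :\ j) \notin F -> (fweight (sh i j F) < fweight F)%N.
Proof.
move=> ij FA jA iA nFB.
have ij' : i != j by rewrite -val_eqE /=; lia.
have weight_le B : (weight (shift_member i j F B) <= weight B)%N.
  rewrite /shift_member; case: and3P => // -[jB iB _].
  by have := weight_shift jB iB; lia.
have weight_lt : (weight (shift_member i j F A) < weight A)%N.
  by rewrite /shift_member jA iA nFB /=; have := weight_shift jA iA; lia.
rewrite /fweight /sh -/(shift_member i j F) (big_imset _ (shift_member_inj ij')) /=.
rewrite (bigD1 A) // [X in (_ < X)%N](bigD1 A) //= -addSn leq_add //.
by apply: leq_sum => B _; apply: weight_le.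
Qed.

Lemma shifts_to_shifted F : exists s : seq ('I_n * 'I_n),
  all ordered_pair s /\ shifted (apply_shifts s F).
Proof.
have [k] : exists k, (fweight F < k)%N by exists (fweight F).+1.
elim: k F => [|k IHk] F // Fk.
have [/existsP[A /andP[FA]]|noshift] := boolP [exists A in F,
  exists i : 'I_n, exists j : 'I_n, [&& (i < j)%N, j \in A, i \notin A & i |: (A :\ j) \notin F]].
  case/existsP => i /existsP[j /and4P[ij jA iA nFB]].
  have [s [lt_s shs]] := IHk _ (leq_trans (fweight_sh ij FA jA iA nFB) Fk).
  by exists ((i, j) :: s); split => //=; apply/andP.
exists [::]; split => // A i j FA ij jA iA; apply/negPn/negP => nFB.
move/negP: noshift; apply; apply/existsP; exists A; rewrite FA /=.
by apply/existsP; exists i; apply/existsP; exists j; rewrite ij jA iA nFB.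
Qed.

Lemma comb_shifting_superset D F s :
  all ordered_pair s -> shifted D ->
  D \subset apply_shifts s F -> exists Gc, comb_shifting F Gc /\ D \subset Gc.
Proof.
move=> lt_s shD DF; have [s' [lt_s' shs']] := shifts_to_shifted (apply_shifts s F).
exists (apply_shifts s' (apply_shifts s F)); split.
  by exists (s ++ s'); rewrite all_cat lt_s lt_s' /apply_shifts foldl_cat.
exact: shifted_sub_apply_shifts.
Qed.

Lemma mem_Bn (a b : 'I_n) : (a < b)%N -> (a.+1 + b.+1 <= n)%N -> [set a; b] \in Bn n.
Proof.
move=> ab abn; rewrite inE; apply/existsP; exists a.
by apply/existsP; exists b; rewrite ab abn eqxx.
Qed.

Lemma BnP A : reflect (exists a b : 'I_n, [/\ (a < b)%N, (a.+1 + b.+1 <= n)%N & A = [set a; b]])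
  (A \in Bn n).
Proof.
apply: (iffP idP) => [|[a [b [ab abn ->]]]]; last exact: mem_Bn.
by rewrite inE => /existsP[a /existsP[b /and3P[ab abn /eqP->]]]; exists a, b.
Qed.

Lemma Bn_shifted : shifted (Bn n).
Proof.
move=> A i j /BnP[a [b [ab abn ->]]] ij; rewrite !in_set2 negb_or.
have ab' : a != b by rewrite -val_eqE /=; lia.
case/orP => /eqP jE; subst j => /andP[ia ib].
  by rewrite setU1K ?in_set1 //; apply: mem_Bn; lia.
rewrite [[set a; b]]setUC setU1K ?in_set1 1?eq_sym //.
have [lt_ia|lt_ai] : (i < a)%N \/ (a < i)%N by move: ia; rewrite -val_eqE /=; lia.
- by apply: mem_Bn; lia.
- by rewrite setUC; apply: mem_Bn; lia.
Qed.

End Shifting.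

Definition meets_every_triple (T : finType) (E : {set {set T}}) :=
  forall x y z : T, x != y -> x != z -> y != z ->
    [|| [set x; y] \in E, [set x; z] \in E | [set y; z] \in E].

Section ShiftToBn.
Variables (n K : nat) (F0 : {set {set 'I_n}}).
Hypothesis K_half : (K + K <= n)%N.
Hypothesis F0_triple : meets_every_triple F0.
Hypothesis F0_mirror : forall a b : 'I_n, (a < K)%N -> (a + b + 1 = n)%N -> [set a; b] \notin F0.
Hypothesis F0_middle : forall a b : 'I_n, (K <= a)%N -> (K <= b)%N ->
  (a + K < n)%N -> (b + K < n)%N -> a != b -> [set a; b] \in F0.

(* After the shifts sh_(t', n-1-t') for t' < t, the pairs of B(n) with smaller
   element below t are present, and no pair of F0 inside [t, n - t) was lost. *)
Definition stage (t : nat) (F : {set {set 'I_n}}) :=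
  (forall a b : 'I_n, (a < t)%N -> (a < b)%N -> (a.+1 + b.+1 <= n)%N -> [set a; b] \in F) /\
  (forall a b : 'I_n, (t <= a)%N -> (t <= b)%N -> (a + t < n)%N -> (b + t < n)%N ->
     [set a; b] \in F0 -> [set a; b] \in F).

Lemma stage_sh t F (i j : 'I_n) : (t < K)%N -> stage t F -> i = t :> nat ->
  (i + j + 1 = n)%N -> stage t.+1 (sh i j F).
Proof.
move=> tK [Bn_low F0_mid] it ijn; split; last first.
  move=> a b ta tb an bn F0ab; apply: sh_keep_notin; first by apply: F0_mid => //; lia.
  by rewrite in_set2 negb_or -!val_eqE /=; apply/andP; split; lia.
move=> a b at1 ab abn.
have ij : i != j by rewrite -val_eqE /=; lia.
have [a_lt_t|a_ge_t] := ltnP a t.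
  apply: sh_keep; first exact: Bn_low.
  rewrite in_set2 -!val_eqE /= => /orP[/eqP ja|/eqP jb]; first lia.
  have -> : b = j by apply: val_inj.
  rewrite [[set a; j]]setUC setU1K ?in_set1 -?val_eqE /=; last lia.
  by move=> _; rewrite setUC; apply: Bn_low; lia.
have -> : a = i by apply: val_inj => /=; lia.
have ib : i != b by rewrite -val_eqE /=; lia.
have jb : j != b by rewrite -val_eqE /=; lia.
case/or3P: (F0_triple ij ib jb) => [F0ij|F0ib|F0jb].
- by move: F0ij; rewrite (negbTE (F0_mirror _ _)) //; lia.
- apply: sh_keep_notin; first by apply: F0_mid => //; lia.
  by rewrite in_set2 negb_or eq_sym ij jb.
- by apply: sh_pair => //; apply: F0_mid => //; lia.
Qed.

Lemma stage_reachable t : (t <= K)%N -> exists s : seq ('I_n * 'I_n),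
  all ordered_pair s /\ stage t (apply_shifts s F0).
Proof.
elim: t => [|t IHt] tK; first by exists [::].
have [s [lt_s st]] := IHt (ltnW tK).
have t_lt_n : (t < n)%N by lia.
have mirror_lt_n : (n - t.+1 < n)%N by lia.
exists (rcons s (Ordinal t_lt_n, Ordinal mirror_lt_n)).
rewrite all_rcons /apply_shifts foldl_rcons lt_s andbT /=.
split; first by rewrite /ordered_pair /=; lia.
by apply: stage_sh => //=; lia.
Qed.

Lemma shifts_to_Bn : exists s : seq ('I_n * 'I_n),
  all ordered_pair s /\ Bn n \subset apply_shifts s F0.
Proof.
have [s [lt_s [Bn_low F0_mid]]] := stage_reachable (leqnn K).
exists s; split => //; apply/subsetP => A /BnP[a [b [ab abn ->]]].
have [aK|Ka] := ltnP a K; first exact: Bn_low.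
apply: F0_mid; try lia; apply: F0_middle; rewrite -?val_eqE /=; lia.
Qed.

End ShiftToBn.

Section Nest.
Variable T : eqType.
Implicit Types (p : seq (T * T)) (r : seq T).

Definition nest p r := map fst p ++ r ++ rev (map snd p).

Lemma size_nest p r : size (nest p r) = (size p + size r + size p)%N.
Proof. by rewrite !size_cat size_rev !size_map addnA. Qed.

Lemma nth_nest_fst x0 p r a : (a < size p)%N ->
  nth x0 (nest p r) a = (nth (x0, x0) p a).1.
Proof. by move=> ap; rewrite nth_cat size_map ap (nth_map (x0, x0)). Qed.

Lemma nth_nest_snd x0 p r a b : (a < size p)%N -> (a + b + 1 = size (nest p r))%N ->
  nth x0 (nest p r) b = (nth (x0, x0) p a).2.
Proof.
rewrite size_nest => ap abn.
rewrite nth_cat size_map ifF; last by apply/negbTE; rewrite -leqNgt; lia.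
rewrite nth_cat ifF; last by apply/negbTE; rewrite -leqNgt; lia.
rewrite nth_rev size_map; last lia.
by rewrite (nth_map (x0, x0)); [congr (nth _ _ _).2; lia | lia].
Qed.

Lemma nth_nest_mid x0 p r a : (size p <= a)%N -> (a < size p + size r)%N ->
  nth x0 (nest p r) a \in r.
Proof.
move=> pa ar; rewrite nth_cat size_map ifF; last by apply/negbTE; rewrite -leqNgt.
by rewrite nth_cat ifT; [apply: mem_nth | ]; lia.
Qed.

End Nest.

Lemma nest_non_edges_clique (T : finType) (E : {set {set T}}) (W : {set T}) : exists p r,
  [/\ uniq (nest p r), nest p r =i W,
      all (fun q : T * T => [set q.1; q.2] \notin E) p &
      forall x y, x \in r -> y \in r -> x != y -> [set x; y] \in E].
Proof.
have [k] : exists k, (#|W| < k)%N by exists #|W|.+1.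
elim: k W => [|k IHk] W // Wk.
have [/existsP[x /andP[xW /existsP[y /and3P[yW xy nExy]]]]|clique] :=
  boolP [exists x in W, exists y in W, (x != y) && ([set x; y] \notin E)].
  have yWx : y \in W :\ x by rewrite in_setD1 eq_sym xy.
  have W'k : (#|W :\ x :\ y| < k)%N.
    have := proper_card (properD1 yWx); have := proper_card (properD1 xW); lia.
  have [p [r [uniq_pr cover_pr nE_p clique_r]]] := IHk _ W'k.
  have nest_cons : nest ((x, y) :: p) r = x :: rcons (nest p r) y.
    by rewrite /nest /= rev_cons !rcons_cat.
  exists ((x, y) :: p), r; split => //; last by rewrite /= nExy.
  - rewrite nest_cons /= rcons_uniq uniq_pr mem_rcons in_cons (negbTE xy) !cover_pr.
    by rewrite !inE !eqxx !andbF.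
  - move=> z; rewrite nest_cons in_cons mem_rcons in_cons cover_pr !inE.
    by case: (eqVneq z x) => [->|] //=; case: (eqVneq z y) => [->|].
exists [::], (enum W); split => //.
- by rewrite /nest /= cats0 enum_uniq.
- by move=> z; rewrite /nest /= cats0 mem_enum.
- move=> x y; rewrite !mem_enum => xW yW xy; apply/negPn/negP => nExy.
  move/negP: clique; apply; apply/existsP; exists x; rewrite xW.
  by apply/existsP; exists y; rewrite yW xy.
Qed.

Lemma meets_every_triple_pairs (T : finType) (E : {set {set T}}) :
  (forall e, e \in E -> #|e| = 2) ->
  (forall S : {set T}, #|S| = 3 -> exists2 e, e \in E & e \subset S) ->
  meets_every_triple E.
Proof.
move=> E2 E3 x y z xy xz yz.
have card_xyz : #|[set x; y; z]| = 3.
  by rewrite -setUA cardsU1 cardsU1 cards1 !inE negb_or xy xz yz.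
have [e Ee exyz] := E3 _ card_xyz.
have /cards2P[u [v [uv def_e]]] : #|e| == 2 by rewrite E2.
have E_sym a b : ([set a; b] \in E) = ([set b; a] \in E) by rewrite setUC.
move: (subsetP exyz u) (subsetP exyz v) uv Ee; rewrite def_e set21 set22 !inE -!orbA.
move=> /(_ isT)/or3P[]/eqP-> /(_ isT)/or3P[]/eqP-> //; rewrite ?eqxx // => _ Euv;
  rewrite ?Euv ?orbT //; rewrite E_sym in Euv; by rewrite Euv ?orbT.
Qed.

Lemma mem_imset_pair (T U : finType) (f : T -> U) (E : {set {set T}}) x y :
  injective f -> ([set f x; f y] \in [set f @: e | e : {set T} in E]) = ([set x; y] \in E).
Proof.
move=> f_inj; have -> : [set f x; f y] = f @: [set x; y] by rewrite imsetU1 imset_set1.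
exact: (mem_imset _ _ (imset_inj f_inj)).
Qed.

Lemma meets_every_triple_imset (T U : finType) (f : T -> U) (g : U -> T)
    (E : {set {set T}}) : cancel f g -> cancel g f ->
  meets_every_triple E -> meets_every_triple [set f @: e | e : {set T} in E].
Proof.
move=> fK gK tE x y z xy xz yz; have f_inj := can_inj fK.
by rewrite -[x]gK -[y]gK -[z]gK !mem_imset_pair //; apply: tE; rewrite (can_eq gK).
Qed.

Lemma seq_labeling (T : finType) n (s : seq T) : uniq s -> size s = n -> #|T| = n ->
  exists2 g : 'I_n -> T, bijective g & forall a x0, g a = nth x0 s a.
Proof.
move=> s_uniq sn Tn; pose t : n.-tuple T := Tuple (introT eqP sn).
exists (tnth t) => [|a x0]; last exact: tnth_nth.
by apply: inj_card_bij; [apply/tuple_uniqP | rewrite card_ord Tn].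
Qed.

Theorem mainTheorem6 (T : finType) (n : nat) (E : {set {set T}})
  (hn : #|T| = n)
  (hE : forall e, e \in E -> #|e| = 2)
  (h3 : forall S : {set T}, #|S| = 3 -> exists2 e, e \in E & e \subset S) :
  exists f : T -> 'I_n, bijective f /\
    exists Gc : {set {set 'I_n}},
      comb_shifting [set f @: e | e : {set T} in E] Gc /\ Bn n \subset Gc.
Proof.
have [p [r [s_uniq s_cover nE_p clique_r]]] := nest_non_edges_clique E [set: T].
have size_s : size (nest p r) = n.
  by rewrite -(card_uniqP s_uniq) -hn -cardsT; apply: eq_card.
have size_pr := size_nest p r.
have [g g_bij g_nth] := seq_labeling s_uniq size_s hn.
have [f gK fK] := g_bij.
exists f; split; first by exists g.
have memF a b : ([set a; b] \in [set f @: e | e : {set T} in E]) = ([set g a; g b] \in E).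
  by rewrite -{1}(gK a) -{1}(gK b) mem_imset_pair //; apply: can_inj fK.
have [s [lt_s BnF]] : exists s, all ordered_pair s /\
    Bn n \subset apply_shifts s [set f @: e | e : {set T} in E].
  apply: (shifts_to_Bn (K := size p)).
  - lia.
  - exact: meets_every_triple_imset fK gK (meets_every_triple_pairs hE h3).
  - move=> a b ap abn; have x0 := g a; rewrite memF !(g_nth _ x0).
    rewrite (nth_nest_fst _ _ ap) (nth_nest_snd _ ap); last lia.
    exact: (all_nthP _ nE_p).
  - move=> a b pa pb ap bp ab; rewrite memF.
    apply: clique_r; [| | by rewrite (can_eq gK)];
      by rewrite (g_nth _ (g a)); apply: nth_nest_mid; lia.
have [Gc [shGc BnGc]] := comb_shifting_superset lt_s (@Bn_shifted n) BnF.
by exists Gc.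
Qed.
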